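(* Every mirror graph is harmonic-even. Equivalently (for partial cubes), if $G$ is a mirror graph with isometric dimension $i(G)$, then every vertex $v$ of $G$ has a vertex at distance exactly $i(G)$ from $v$.
   Context: All graphs are finite, simple and connected; $d$ denotes the shortest-path distance. A partition $\{E_1,\dots,E_k\}$ of $E(G)$ is a mirror partition if for every $i$ there is an automorphism $\alpha_i$ of $G$ such that (i) for every edge $uv\in E_i$, $\alpha_i(u)=v$ and $\alpha_i(v)=u$; (ii) $G-E_i$ has exactly two connected components $G_i^1,G_i^2$ and $\alpha_i$ maps $G_i^1$ isomorphically onto $G_i^2$. A graph with a mirror partition is a mirror graph. A partial cube is a graph admitting an isometric embedding into a hypercube $Q_d$. On edges define $ab\,\Theta\,xy$ iff $d(a,x)+d(b,y)\neq d(a,y)+d(b,x)$; in a partial cube $\Theta$ is an equivalence relation whose classes are the $\Theta$-classes, and the isometric dimension $i(G)$ is the number of $\Theta$-classes. Every mirror graph is a partial cube and its mirror partition coincides with the partition into $\Theta$-classes. A graph is even if every vertex $v$ has a unique vertex $\bar v$ at distance $\mathrm{diam}(G)$; it is harmonic-even if moreover $\bar u\bar v$ is an edge whenever $uv$ is an edge. A partial cube is harmonic-even iff every vertex has a vertex at distance $i(G)$ from it. *)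

(* A finite simple graph is a symmetric irreflexive
   relation e : rel T on a finType T. *)
From mathcomp Require Import all_boot.
Set Implicit Arguments. Unset Strict Implicit. Unset Printing Implicit Defensive.

Section Graphs.
Variable T : finType.
Implicit Types (e : rel T) (x y : T).

Definition simple_connected_graph e : Prop :=
  symmetric e /\ irreflexive e /\ (forall x y, connect e x y).

Definition has_walk e x y (n : nat) : bool :=
  [exists p : n.-tuple T, path e x p && (last x p == y)].

(* shortest-path distance: least n with a walk of length n
   (all shortest paths in a connected graph have length < #|T|) *)
Definition dist e x y : nat :=
  find (has_walk e x y) (iota 0 #|T|).

Definition diam e : nat := \max_(x : T) \max_(y : T) dist e x y.

Definition edges e : {set {set T}} :=
  [set [set x; y] | x in T, y in T & e x y].

Definition del_edges e (F : {set {set T}}) : rel T :=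
  [rel x y | e x y && ([set x; y] \notin F)].

Definition comp (r : rel T) (a : T) : {set T} := [set z | connect r a z].

Definition is_aut e (f : T -> T) : Prop := bijective f /\
  (forall x y, e (f x) (f y) = e x y).

Definition mirror_block e (F : {set {set T}}) : Prop :=
  exists2 al : T -> T, is_aut e al &
    (forall u v, e u v -> [set u; v] \in F -> al u = v /\ al v = u) /\
    (* (ii) G - F has exactly two components G1 (of a), G2 (of b),
       and al maps G1 isomorphically onto G2 *)
    (let r := del_edges e F in
     exists a b,
       ~~ connect r a b /\
       (forall z, connect r a z || connect r b z) /\
       [set al z | z in comp r a] = comp r b /\
       (forall x y, x \in comp r a -> y \in comp r a ->
          r (al x) (al y) = r x y)).

Definition mirror_partition e (P : {set {set {set T}}}) : Prop :=
  partition P (edges e) /\ (forall F, F \in P -> mirror_block e F).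

Definition mirror_graph e : Prop := exists P, mirror_partition e P.

Definition harmonic_even e : Prop :=
  exists bar : T -> T,
    (forall v, dist e v (bar v) = diam e /\
               (forall w, dist e v w = diam e -> w = bar v)) /\
    (forall u v, e u v -> e (bar u) (bar v)).

End Graphs.

(* Let F be a block of the mirror partition, with mirror al.  Reflecting by al
   the part of a walk between two consecutive edges of F shortens it by two,
   so a shortest walk uses each block at most once and d(x, y) is the number of
   blocks separating x from y.  A vertex w farthest from v is separated from it
   by every block: otherwise the mirror image of w would be strictly farther.
   Hence d(v, w) = #|P| = diam.  If u', v' are antipodes of u, v, a block
   separates u' from v' iff it separates u from v, so antipodes are unique and
   taking antipodes preserves distances, in particular adjacency. *)
From Pilot Require Import Defs.
From mathcomp Require Import all_boot.
From mathcomp Require Import zify.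
Set Implicit Arguments. Unset Strict Implicit. Unset Printing Implicit Defensive.

Section Walks.
Variables (T : finType) (e : rel T).
Implicit Types (x y : T) (p : seq T).

Lemma has_walkP x y n :
  reflect (exists p, [/\ size p = n, path e x p & last x p = y])
          (has_walk e x y n).
Proof.
apply: (iffP existsP) => [[p /andP [p_path /eqP p_last]] | [p [p_size p_path p_last]]].
  by exists (val p); rewrite size_tuple.
by exists (Tuple (introT eqP p_size)); rewrite /= p_path p_last eqxx.
Qed.

Lemma dist_le_walk x p : path e x p -> dist e x (last x p) <= size p.
Proof.
move=> p_path; rewrite /dist.
have [small|] := ltnP (size p) #|T|; last first.
  by apply: leq_trans; rewrite -{2}(size_iota 0 #|T|) find_size.
rewrite leqNgt; apply/negP => /(before_find 0); rewrite nth_iota // add0n.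
by move=> /negbT/negP; apply; apply/has_walkP; exists p.
Qed.

Lemma shortest_walk x y : connect e x y ->
  exists p, [/\ size p = dist e x y, path e x p & last x p = y].
Proof.
move=> /connectP [p0 p0_path ->]; have [p p_path p_uniq _] := shortenP p0_path.
have p_small : size p < #|T|.
  by have := max_card (mem (x :: p)); rewrite (card_uniqP p_uniq).
have walk_exists : has (has_walk e x (last x p)) (iota 0 #|T|).
  by apply/hasP; exists (size p); rewrite ?mem_iota //; apply/has_walkP; exists p.
have := nth_find 0 walk_exists; rewrite has_find size_iota in walk_exists.
by rewrite nth_iota // add0n => /has_walkP.
Qed.

Lemma dist_refl x : dist e x x = 0.
Proof. by apply/eqP; rewrite -leqn0 (dist_le_walk (p := [::])). Qed.

Lemma dist_eq0 x y : connect e x y -> dist e x y = 0 -> x = y.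
Proof. by move=> /shortest_walk [[|z p] [<- _ <-]]. Qed.

Lemma dist_edge x y : irreflexive e -> e x y -> dist e x y = 1.
Proof.
move=> e_irr xy; have := dist_le_walk (p := [:: y]) (x := x).
rewrite /= xy => /(_ isT); case d_xy: (dist e x y) => [|[|//]] // _.
by move: (xy); rewrite (dist_eq0 (connect1 xy) d_xy) e_irr.
Qed.

Lemma dist1_edge x y : connect e x y -> dist e x y = 1 -> e x y.
Proof.
move=> /shortest_walk [p [<- p_path <-]].
by case: p p_path => [|z [|//]] //= /andP [].
Qed.

End Walks.

Fixpoint crossings (T : finType) (F : {set {set T}}) (x : T) (p : seq T) : nat :=
  if p is y :: p' then ([set x; y] \in F) + crossings F y p' else 0.

Lemma crossings_cat (T : finType) (F : {set {set T}}) x p q :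
  crossings F x (p ++ q) = crossings F x p + crossings F (last x p) q.
Proof. by elim: p x => [|y p IH] x //=; rewrite IH addnA. Qed.

Lemma first_crossing (T : finType) (F : {set {set T}}) x p :
  0 < crossings F x p ->
  exists q1 d q2, [/\ p = q1 ++ d :: q2, [set last x q1; d] \in F
                    & crossings F x q1 = 0].
Proof.
elim: p x => [|y p IH] x //=.
case xy_F: ([set x; y] \in F); first by exists [::], y, p.
rewrite add0n => /IH [q1 [d [q2 [-> dF q1_cross]]]].
by exists (y :: q1), d, q2; rewrite /= xy_F q1_cross.
Qed.

Definition sep (T : finType) (e : rel T) (F : {set {set T}}) x y :=
  ~~ connect (del_edges e F) x y.

Lemma mirror_block_side (T : finType) (e : rel T) (F : {set {set T}}) :
  symmetric e -> mirror_block e F ->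
  exists al : T -> T, exists side : T -> bool,
   [/\ is_aut e al,
       forall u v, e u v -> [set u; v] \in F -> al u = v,
       forall z, side (al z) = ~~ side z,
       forall a b, e a b -> (side a != side b) = ([set a; b] \in F)
     & forall x y, connect (del_edges e F) x y = (side x == side y)].
Proof.
move=> e_sym [al [[g al_g g_al] al_mono] [al_swap [a [b [ab [cover_ab [al_ab _]]]]]]].
set r := del_edges e F in ab cover_ab al_ab *.
have r_csym : connect_sym r.
  by apply: sym_connect_sym => x y; rewrite /r /del_edges /= e_sym setUC.
pose side := connect r a.
have connect_side x y : connect r x y = (side x == side y).
  apply/idP/eqP => [xy | ].
    apply/idP/idP => [ax | ay]; first exact: connect_trans ax xy.
    by apply: connect_trans ay _; rewrite r_csym.
  rewrite /side; case ax: (connect r a x) => /esym ay.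
    by apply: (connect_trans _ ay); rewrite r_csym.
  move: (cover_ab x) (cover_ab y); rewrite ax ay /= => b_x b_y.
  by apply: (connect_trans _ b_y); rewrite r_csym.
have side_al z : side (al z) = ~~ side z.
  have b_alz : connect r b (al z) = side z.
    by have := mem_imset (mem (Defs.comp r a)) z (can_inj al_g); rewrite al_ab !inE.
  move: b_alz; rewrite /side; case: (connect r a z) => b_alz /=.
    apply/negP => a_alz; move/negP: ab; apply.
    by apply: connect_trans a_alz _; rewrite r_csym.
  by have := cover_ab (al z); rewrite b_alz orbF.
exists al, side; split=> // [|u v uv uv_F|u v uv]; first by split; [exists g|].
  by have [] := al_swap u v uv uv_F.
case uv_F: ([set u; v] \in F).
  by rewrite -(al_swap u v uv uv_F).1 side_al; case: (side u).
apply/negbTE; rewrite negbK -connect_side; apply: connect1.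
by rewrite /r /del_edges /= uv uv_F.
Qed.

Section MirrorBlock.
Variables (T : finType) (e : rel T) (F : {set {set T}}).
Variables (al : T -> T) (side : T -> bool).
Hypotheses (e_sym : symmetric e) (al_bij : bijective al)
  (al_mono : {mono al : x y / e x y})
  (al_swap : forall u v, e u v -> [set u; v] \in F -> al u = v)
  (side_al : forall z, side (al z) = ~~ side z)
  (side_edge : forall a b, e a b -> (side a != side b) = ([set a; b] \in F))
  (connect_side : forall x y, connect (del_edges e F) x y = (side x == side y)).
Implicit Types (x y v w : T) (p : seq T).

Lemma sep_side x y : sep e F x y = (side x != side y).
Proof. by rewrite /sep connect_side. Qed.

Lemma side_last x p :
  path e x p -> side (last x p) = side x (+) odd (crossings F x p).
Proof.
elim: p x => [|y p IH] x /=; first by rewrite addbF.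
move=> /andP [xy /IH->]; rewrite oddD oddb -(side_edge xy).
by case: (side x); case: (side y); case: odd.
Qed.

Lemma shortcut_double_crossing x p : path e x p -> 1 < crossings F x p ->
  exists p', [/\ path e x p', last x p' = last x p & (size p').+2 = size p].
Proof.
move=> p_path two_cross.
have [q1 [c' [q2 [p_eq c_F q1_cross]]]] := first_crossing (ltnW two_cross).
rewrite p_eq crossings_cat q1_cross /= c_F ltnS in two_cross.
have [r1 [d' [r2 [q2_eq d_F _]]]] := first_crossing two_cross.
set c := last x q1 in c_F; set d := last c' r1 in d_F.
move: p_path; rewrite p_eq q2_eq cat_path /= cat_path /=.
move=> /and5P [q1_path cc' r1_path dd' r2_path].
have al_c' : al c' = c by apply: al_swap; rewrite 1?e_sym 1?setUC.
have al_d : al d = d' by apply: al_swap.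
exists (q1 ++ map al r1 ++ r2); split.
- rewrite !cat_path q1_path -/c -al_c' (mono_path al_mono) r1_path /=.
  by rewrite last_map al_d.
- by rewrite !last_cat /= -/c -al_c' last_map -/d al_d last_cat.
- by rewrite !size_cat /= size_map size_cat /=; lia.
Qed.

Lemma shortest_crossings_le1 x p :
  path e x p -> size p = dist e x (last x p) -> crossings F x p <= 1.
Proof.
move=> p_path p_short; rewrite leqNgt; apply/negP => /(shortcut_double_crossing p_path).
move=> [p' [p'_path p'_last p'_size]].
by have := dist_le_walk p'_path; rewrite p'_last -p_short -p'_size; lia.
Qed.

Lemma sep_shortest x p : path e x p -> size p = dist e x (last x p) ->
  sep e F x (last x p) = crossings F x p :> nat.
Proof.
move=> p_path p_short; rewrite sep_side side_last //.
by case: crossings (shortest_crossings_le1 p_path p_short) => [|[|]] //; case: (side x).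
Qed.

Lemma sep_farthest v w : (forall y, connect e v y) ->
  (forall w', dist e v w' <= dist e v w) -> sep e F v w.
Proof.
move=> v_conn w_far; rewrite sep_side; apply/negP => /eqP side_vw.
have [g al_g g_al] := al_bij.
have g_mono : {mono g : x y / e x y} by move=> x y; rewrite -al_mono !g_al.
have [p [p_size p_path p_last]] := shortest_walk (v_conn (al w)).
have odd_cross : odd (crossings F v p).
  by move: (side_last p_path); rewrite p_last side_al -side_vw; case: (side v); case: odd.
have [q1 [d [q2 [p_eq d_F _]]]] := first_crossing (odd_gt0 odd_cross).
move: p_path p_last; rewrite p_eq cat_path last_cat /= => /and3P [q1_path cd q2_path] q2_last.
have c_eq : last v q1 = g d by rewrite -(al_swap cd d_F) al_g.
have walk_vw : path e v (q1 ++ map g q2).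
  by rewrite cat_path q1_path c_eq (mono_path g_mono).
have := dist_le_walk walk_vw; rewrite last_cat c_eq last_map q2_last al_g size_cat size_map.
by have := w_far (al w); rewrite -p_size p_eq size_cat /=; lia.
Qed.

End MirrorBlock.

Lemma edge_in_unique_block (T : finType) (e : rel T) P x y :
  partition P (edges e) -> e x y -> \sum_(F in P) ([set x; y] \in F : nat) = 1.
Proof.
move=> /and3P [/eqP P_cover P_triv _] xy.
have : [set x; y] \in cover P by rewrite P_cover; apply/imset2P; exists x y; rewrite ?inE.
move=> /bigcupP [F0 F0_P xy_F0]; rewrite (bigD1 F0) //= xy_F0 big1 // => F /andP [F_P F_F0].
have disj_F : [disjoint F0 & F] by apply: (trivIsetP P_triv); rewrite // eq_sym.
by rewrite (disjointFr disj_F xy_F0).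
Qed.

Lemma sum_crossings (T : finType) (e : rel T) P x p :
  partition P (edges e) -> path e x p -> \sum_(F in P) crossings F x p = size p.
Proof.
move=> P_part; elim: p x => [|y p IH] x /=; first by rewrite big1.
by move=> /andP [xy /IH <-]; rewrite big_split /= (edge_in_unique_block P_part xy).
Qed.

Lemma sum_bool_eq_card (I : finType) (A : {pred I}) (b : pred I) :
  \sum_(i in A) b i = #|A| -> {in A, forall i, b i}.
Proof.
have le_b1 i : i \in A -> b i <= 1 ?= iff b i by move=> _; split; case: (b i).
move=> /esym; rewrite -sum1_card => /eqP; rewrite eq_sym (leqif_sum le_b1).
by move=> /forall_inP.
Qed.

Section MirrorGraph.
Variables (T : finType) (e : rel T) (P : {set {set {set T}}}).
Hypotheses (e_graph : simple_connected_graph e) (P_mirror : mirror_partition e P).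
Let e_sym : symmetric e := e_graph.1.
Let e_conn : forall x y, connect e x y := e_graph.2.2.
Let P_part : partition P (edges e) := P_mirror.1.
Let P_block : forall F, F \in P -> mirror_block e F := P_mirror.2.
Implicit Types (x y u v w : T) (F : {set {set T}}).

Lemma sep_blockP F : F \in P ->
  exists side : T -> bool, forall x y, sep e F x y = (side x != side y).
Proof.
move=> /P_block /(mirror_block_side e_sym) [al [side [_ _ _ _ connect_side]]].
by exists side; apply: sep_side.
Qed.

Lemma dist_sep x y : dist e x y = \sum_(F in P) sep e F x y.
Proof.
have [p [p_size p_path p_last]] := shortest_walk (e_conn x y).
rewrite -p_size -(sum_crossings P_part p_path); apply: eq_bigr => F F_P.
have [al [side [[_ al_mono] al_swap _ side_edge connect_side]]] :=
  mirror_block_side e_sym (P_block F_P).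
by rewrite -p_last (sep_shortest e_sym al_mono al_swap side_edge connect_side) ?p_last.
Qed.

Lemma dist_le_card x y : dist e x y <= #|P|.
Proof. by rewrite dist_sep -sum1_card leq_sum // => F _; apply: leq_b1. Qed.

Definition antipodal v w := forall F, F \in P -> sep e F v w.

Lemma antipodal_dist v w : antipodal v w <-> dist e v w = #|P|.
Proof.
rewrite dist_sep; split => [vw | /sum_bool_eq_card //].
by rewrite -sum1_card; apply: eq_bigr => F /vw ->.
Qed.

Lemma farthest_antipodal v w :
  (forall w', dist e v w' <= dist e v w) -> antipodal v w.
Proof.
move=> w_far F F_P.
have [al [side [[al_bij al_mono] al_swap side_al side_edge connect_side]]] :=
  mirror_block_side e_sym (P_block F_P).
exact: (sep_farthest al_bij al_mono al_swap side_al side_edge connect_side (e_conn v)).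
Qed.

Lemma dist_antipodes u u' v v' :
  antipodal u u' -> antipodal v v' -> dist e u' v' = dist e u v.
Proof.
move=> uu' vv'; rewrite !dist_sep; apply: eq_bigr => F F_P.
have [side sep_sd] := sep_blockP F_P.
move: (uu' F F_P) (vv' F F_P); rewrite !sep_sd.
by case: (side u); case: (side u'); case: (side v); case: (side v').
Qed.

Lemma diam_antipodal v w : antipodal v w -> diam e = #|P|.
Proof.
move=> /antipodal_dist vw; apply/eqP; rewrite eqn_leq; apply/andP; split.
  by apply/bigmax_leqP => x _; apply/bigmax_leqP => y _; apply: dist_le_card.
rewrite -vw; apply: leq_trans (leq_bigmax v).
exact: (leq_bigmax (F := fun y => dist e v y) w).
Qed.

End MirrorGraph.

Theorem lemma1 (T : finType) (e : rel T) :
  simple_connected_graph e -> mirror_graph e -> harmonic_even e.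
Proof.
move=> e_graph [P P_mirror].
pose bar v := [arg max_(w > v) dist e v w].
have bar_antipodal v : antipodal e P v (bar v).
  apply: (farthest_antipodal e_graph P_mirror); rewrite /bar.
  by case: arg_maxnP => // w _ w_max w'; apply: w_max.
have dist_bar := dist_antipodes e_graph P_mirror (bar_antipodal _) (bar_antipodal _).
exists bar; split => [v | u v uv].
  have diamE := diam_antipodal e_graph P_mirror (bar_antipodal v).
  split=> [|w]; first by rewrite diamE -(antipodal_dist e_graph P_mirror).
  rewrite diamE -(antipodal_dist e_graph P_mirror) => vw.
  apply: esym (dist_eq0 (e_graph.2.2 _ _) _).
  by rewrite (dist_antipodes e_graph P_mirror (bar_antipodal v) vw) dist_refl.
apply: dist1_edge (e_graph.2.2 _ _) _.
by rewrite dist_bar; apply: dist_edge e_graph.2.1 uv.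
Qed.
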